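(* Let $\alpha=(A_0\leftarrow\cdots\leftarrow A_m)$ and $\beta=(B_0\leftarrow\cdots\leftarrow B_n)$ be universal evolutions for vertices $A_m$ and $B_n$, respectively, of a monotonous quiver, and suppose $A_m\le B_n$. If $m=n\ge1$, then $A_{m-1}\sim B_{n-1}$. If $m<n$, then $A_m\le B_{n-1}$.
   Context: A quiver consists of a class of vertices and, for each ordered pair of vertices $(A,B)$, a set of edges $A\to B$ (loops and multiple edges allowed). An evolution of length $m\ge 0$ is a sequence $A_0\leftarrow A_1\leftarrow\cdots\leftarrow A_m$ of vertices together with edges $A_k\to A_{k-1}$ ($1\le k\le m$); $A_0$ is its initial and $A_m$ its terminal vertex. Write $A\le B$ ($A$ is an ancestor of $B$) if there is an evolution with initial vertex $A$ and terminal vertex $B$; $A,B$ are isotypic ($A\sim B$) if $A\le B$ and $B\le A$. A vertex $A$ is primitive if every ancestor of $A$ is isotypic to $A$. A full evolution for $X$ is an evolution with primitive initial vertex and terminal vertex $X$. The height $h(X)$ is the smallest length of a full evolution for $X$ ($\infty$ if none). An evolution $\alpha=(A_0\leftarrow\cdots\leftarrow A_m)$ embeds in $\beta=(B_0\leftarrow\cdots\leftarrow B_n)$ if $m\le n$ and there are $0\le r_0<\cdots<r_m\le n$ with $A_k\sim B_{r_k}$. A universal evolution for $X$ is a full evolution for $X$ embedding in every full evolution for $X$. A quiver is monotonous if $h(A)\ge h(B)$ for every edge $A\to B$. *)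

From Stdlib Require Import Arith Lia.

Record quiver := Quiver { vert : Type; edge : vert -> vert -> Type }.

Record evolution (Q : quiver) := Evolution {
  ev_len : nat;
  ev_v : nat -> vert Q;
  ev_e : forall k, 1 <= k <= ev_len -> edge Q (ev_v k) (ev_v (k - 1)) }.
Arguments ev_len {Q}.
Arguments ev_v {Q}.

Definition initial {Q} (a : evolution Q) : vert Q := ev_v a 0.
Definition terminal {Q} (a : evolution Q) : vert Q := ev_v a (ev_len a).

Definition ancestor {Q} (A B : vert Q) : Prop :=
  exists a : evolution Q, initial a = A /\ terminal a = B.

Definition isotypic {Q} (A B : vert Q) : Prop := ancestor A B /\ ancestor B A.

Definition primitive {Q} (A : vert Q) : Prop :=
  forall B, ancestor B A -> isotypic B A.

Definition full_evolution {Q} (X : vert Q) (a : evolution Q) : Prop :=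
  primitive (initial a) /\ terminal a = X.

(* h(X) = n (finite height). h(X) = infinity iff no n satisfies this. *)
Definition has_height {Q} (X : vert Q) (n : nat) : Prop :=
  (exists a, full_evolution X a /\ ev_len a = n) /\
  (forall a, full_evolution X a -> n <= ev_len a).

Definition height_ge {Q} (A B : vert Q) : Prop :=
  forall n, has_height A n -> exists k, has_height B k /\ k <= n.

Definition embeds {Q} (a b : evolution Q) : Prop :=
  ev_len a <= ev_len b /\
  exists r : nat -> nat,
    (forall k, k < ev_len a -> r k < r (S k)) /\
    r (ev_len a) <= ev_len b /\
    (forall k, k <= ev_len a -> isotypic (ev_v a k) (ev_v b (r k))).

Definition universal_evolution {Q} (X : vert Q) (a : evolution Q) : Prop :=
  full_evolution X a /\ forall b, full_evolution X b -> embeds a b.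

Definition monotonous (Q : quiver) : Prop :=
  forall A B : vert Q, edge Q A B -> height_ge A B.

From Stdlib Require Import Arith Lia Classical.

(* Let c be [a] followed by an evolution from A_m to B_n; it is a full evolution
   for B_n, so the universal [b] embeds in it by some r with k <= r k.  For
   k = n - 1 either r (n-1) < m, which forces m = n and A_{n-1} ~ B_{n-1}, or
   A_m = c_m <= c_{r(n-1)} ~ B_{n-1}.  When m = n the latter is impossible:
   heights grow along evolutions in a monotonous quiver, h(A_m) = m since [a]
   is universal, while the prefix of [b] shows h(B_{n-1}) <= n - 1. *)

Definition edge_cast {Q : quiver} {x x' y y' : vert Q} :
  x = x' -> y = y' -> edge Q x y -> edge Q x' y'.
Proof. intros -> ->; exact id. Defined.

Lemma evolution_slice {Q : quiver} (e : evolution Q) (i j : nat) :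
  i <= j <= ev_len e ->
  exists d : evolution Q, ev_len d = j - i /\ forall k, ev_v d k = ev_v e (i + k).
Proof.
  intros Hij.
  unshelve eexists (Evolution Q (j - i) (fun k => ev_v e (i + k)) _).
  - intros k Hk. refine (edge_cast eq_refl _ (@ev_e Q e (i + k) _)).
    + f_equal; lia.
    + lia.
  - split; reflexivity.
Qed.

Lemma ancestor_slice {Q : quiver} (e : evolution Q) (i j : nat) :
  i <= j <= ev_len e -> ancestor (ev_v e i) (ev_v e j).
Proof.
  intros Hij. destruct (evolution_slice e i j Hij) as [d [Hlen Hv]].
  exists d. unfold initial, terminal. rewrite Hlen, !Hv. split; f_equal; lia.
Qed.

Lemma evolution_cat {Q : quiver} (e1 e2 : evolution Q) :
  terminal e1 = initial e2 ->
  exists c : evolution Q, ev_len c = ev_len e1 + ev_len e2 /\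
    (forall k, k <= ev_len e1 -> ev_v c k = ev_v e1 k) /\
    (forall k, ev_v c (ev_len e1 + k) = ev_v e2 k).
Proof.
  intros Hjoin.
  set (v := fun k => if k <=? ev_len e1 then ev_v e1 k else ev_v e2 (k - ev_len e1)).
  assert (Hv1 : forall k, k <= ev_len e1 -> v k = ev_v e1 k).
  { intros k Hk. unfold v. rewrite (proj2 (Nat.leb_le _ _) Hk). reflexivity. }
  assert (Hv2 : forall k, ev_len e1 <= k -> v k = ev_v e2 (k - ev_len e1)).
  { intros k Hk. unfold v. destruct (Nat.leb_spec k (ev_len e1)); [|reflexivity].
    replace k with (ev_len e1) by lia. rewrite Nat.sub_diag. exact Hjoin. }
  unshelve eexists (Evolution Q (ev_len e1 + ev_len e2) v _).
  - intros k Hk. destruct (le_gt_dec k (ev_len e1)).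
    + refine (edge_cast (eq_sym (Hv1 k _)) (eq_sym (Hv1 (k - 1) _)) (@ev_e Q e1 k _));
        lia.
    + refine (edge_cast (eq_sym (Hv2 k _)) _ (@ev_e Q e2 (k - ev_len e1) _)); [lia| |lia].
      rewrite Hv2 by lia. f_equal; lia.
  - split; [reflexivity|split; [exact Hv1|]].
    intros k. simpl. rewrite Hv2 by lia. f_equal; lia.
Qed.

Lemma ancestor_trans {Q : quiver} (A B C : vert Q) :
  ancestor A B -> ancestor B C -> ancestor A C.
Proof.
  intros [e1 [H1 H2]] [e2 [H3 H4]].
  destruct (evolution_cat e1 e2) as [c [Hlen [Hc1 Hc2]]]; [congruence|].
  exists c. unfold initial, terminal in *. split.
  - rewrite Hc1 by lia. exact H1.
  - rewrite Hlen, Hc2. exact H4.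
Qed.

Lemma full_evolution_prefix {Q : quiver} (X : vert Q) (e : evolution Q) (k : nat) :
  full_evolution X e -> k <= ev_len e ->
  exists d, full_evolution (ev_v e k) d /\ ev_len d = k.
Proof.
  intros [Hprim _] Hk.
  destruct (evolution_slice e 0 k ltac:(lia)) as [d [Hlen Hv]].
  exists d. split; [split|lia].
  - unfold initial. rewrite Hv. exact Hprim.
  - unfold terminal. rewrite Hlen, Hv. f_equal; lia.
Qed.

Lemma has_height_unique {Q : quiver} (X : vert Q) (n k : nat) :
  has_height X n -> has_height X k -> n = k.
Proof.
  intros [[a [Ha Han]] Hn] [[b [Hb Hbk]] Hk].
  specialize (Hn b Hb). specialize (Hk a Ha). lia.
Qed.

Lemma has_height_of_full_evolution {Q : quiver} (X : vert Q) (e : evolution Q) :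
  full_evolution X e -> exists h, has_height X h /\ h <= ev_len e.
Proof.
  remember (ev_len e) as n eqn:Hn. revert e Hn.
  induction n as [n IH] using lt_wf_ind. intros e Hn He.
  destruct (classic (exists d, full_evolution X d /\ ev_len d < n))
    as [[d [Hd Hdn]] | Hmin].
  - destruct (IH _ Hdn d eq_refl Hd) as [h [Hh Hhd]]. exists h. split; [exact Hh|lia].
  - exists n. split; [split|lia].
    + exists e. auto.
    + intros d Hd. apply Nat.nlt_ge. intros Hdn. apply Hmin. exists d. auto.
Qed.

Lemma universal_has_height {Q : quiver} (X : vert Q) (a : evolution Q) :
  universal_evolution X a -> has_height X (ev_len a).
Proof.
  intros [Ha Hemb]. split.
  - exists a. auto.
  - intros d Hd. exact (proj1 (Hemb d Hd)).
Qed.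

Lemma height_ge_refl {Q : quiver} (A : vert Q) : height_ge A A.
Proof. intros n Hn. exists n. auto. Qed.

Lemma height_ge_trans {Q : quiver} (A B C : vert Q) :
  height_ge A B -> height_ge B C -> height_ge A C.
Proof.
  intros HAB HBC n Hn.
  destruct (HAB n Hn) as [k [Hk Hkn]]. destruct (HBC k Hk) as [l [Hl Hlk]].
  exists l. split; [exact Hl|lia].
Qed.

Lemma height_ge_ancestor {Q : quiver} (HQ : monotonous Q) (A B : vert Q) :
  ancestor A B -> height_ge B A.
Proof.
  intros [e [<- <-]]. unfold initial, terminal.
  assert (Hstep : forall j, j <= ev_len e -> height_ge (ev_v e j) (ev_v e 0)).
  { induction j as [|j IH]; intros Hj; [apply height_ge_refl|].
    apply height_ge_trans with (ev_v e j); [|apply IH; lia].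
    pose proof (HQ _ _ (@ev_e Q e (S j) ltac:(lia))) as Hedge.
    replace (S j - 1) with j in Hedge by lia. exact Hedge. }
  apply Hstep. lia.
Qed.

Lemma universal_len_le_of_ancestor {Q : quiver} (HQ : monotonous Q)
  (X Y : vert Q) (a d : evolution Q) :
  universal_evolution X a -> ancestor X Y -> full_evolution Y d ->
  ev_len a <= ev_len d.
Proof.
  intros Ha HXY Hd.
  destruct (has_height_of_full_evolution Y d Hd) as [h [Hh Hhd]].
  destruct (height_ge_ancestor HQ X Y HXY h Hh) as [k [Hk Hkh]].
  rewrite (has_height_unique X _ _ (universal_has_height X a Ha) Hk). lia.
Qed.

Lemma incr_index_gap (r : nat -> nat) (m : nat) :
  (forall k, k < m -> r k < r (S k)) ->
  forall i j, i <= j <= m -> r i + (j - i) <= r j.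
Proof.
  intros Hr i j. induction j as [|j IH]; intros Hij.
  - replace i with 0 by lia. lia.
  - destruct (Nat.eq_dec i (S j)) as [->|Hne]; [lia|].
    specialize (IH ltac:(lia)). specialize (Hr j ltac:(lia)). lia.
Qed.

(* Embed [b] in [a] followed by an evolution from [terminal a] to [terminal b],
   and ask on which side of the junction the k-th vertex of [b] lands. *)
Lemma universal_vertex_cases {Q : quiver} (a b : evolution Q) (k : nat) :
  full_evolution (terminal a) a -> universal_evolution (terminal b) b ->
  ancestor (terminal a) (terminal b) -> k <= ev_len b ->
  (exists i, k <= i < ev_len a /\ isotypic (ev_v a i) (ev_v b k)) \/
  ancestor (terminal a) (ev_v b k).
Proof.
  intros [Hprim _] [_ Hemb] [g [Hg0 Hg1]] Hk.
  destruct (evolution_cat a g) as [c [Hclen [Hca Hcg]]]; [congruence|].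
  assert (Hc : full_evolution (terminal b) c).
  { split.
    - unfold initial. rewrite Hca by lia. exact Hprim.
    - unfold terminal. rewrite Hclen, Hcg. exact Hg1. }
  destruct (Hemb c Hc) as [_ [r [Hr [Hrlast Hiso]]]].
  pose proof (incr_index_gap r _ Hr 0 k ltac:(lia)) as Hrk.
  pose proof (incr_index_gap r _ Hr k (ev_len b) ltac:(lia)) as Hrn.
  destruct (Nat.lt_ge_cases (r k) (ev_len a)) as [Hlt|Hge].
  - left. exists (r k). split; [lia|].
    rewrite <- (Hca (r k)) by lia. destruct (Hiso k Hk). split; assumption.
  - right. apply ancestor_trans with (ev_v c (r k)).
    + unfold terminal. rewrite <- (Hca (ev_len a)) by lia. apply ancestor_slice. lia.
    + exact (proj2 (Hiso k Hk)).
Qed.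

Theorem lemma7p2 (Q : quiver) (HQ : monotonous Q) (a b : evolution Q)
  (Ha : universal_evolution (terminal a) a)
  (Hb : universal_evolution (terminal b) b)
  (Hle : ancestor (terminal a) (terminal b)) :
  (ev_len a = ev_len b -> 1 <= ev_len a ->
     isotypic (ev_v a (ev_len a - 1)) (ev_v b (ev_len b - 1))) /\
  (ev_len a < ev_len b -> ancestor (terminal a) (ev_v b (ev_len b - 1))).
Proof.
  pose proof (universal_vertex_cases a b (ev_len b - 1) (proj1 Ha) Hb Hle
                ltac:(lia)) as Hcases.
  split.
  - intros Heq Hpos. destruct Hcases as [[i [Hi Hiso]] | Hanc].
    + replace (ev_len a - 1) with i by lia. exact Hiso.
    + exfalso.
      destruct (full_evolution_prefix _ b (ev_len b - 1) (proj1 Hb) ltac:(lia))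
        as [d [Hd Hdlen]].
      pose proof (universal_len_le_of_ancestor HQ _ _ a d Ha Hanc Hd). lia.
  - intros Hlt. destruct Hcases as [[i [Hi _]] | Hanc]; [lia | exact Hanc].
Qed.
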